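(* Let $f,g\in\mathrm{Diffeo}^-(\mathbb{R})$ with $f(0)=g(0)=0$. Then the following two conditions are equivalent: (1) $f=h^{-1}\circ g\circ h$ for some $h\in\mathrm{Diffeo}^+(\mathbb{R})$. (2) (a) There exists $h_1\in\mathrm{Diffeo}^+(\mathbb{R})$ with $h_1(0)=0$ such that $f\circ f=h_1^{-1}\circ (g\circ g)\circ h_1$; and (b) letting $g_1=h_1^{-1}\circ g\circ h_1$, there exists $h_2\in\mathrm{Diffeo}^+(\mathbb{R})$ with $h_2(0)=0$ and $h_2\circ(f\circ f)=(f\circ f)\circ h_2$, such that $T_0 f=(T_0h_2)^{-1}\circ (T_0 g_1)\circ (T_0 h_2)$ in the group of formal power series under composition.
   Context: $\mathrm{Diffeo}(\mathbb{R})$ is the group of $C^\infty$ diffeomorphisms of $\mathbb{R}$ under composition; $\mathrm{Diffeo}^+(\mathbb{R})$ (resp. $\mathrm{Diffeo}^-(\mathbb{R})$) is the set of orientation-preserving (resp. orientation-reversing) diffeomorphisms. For a diffeomorphism $\phi$ with $\phi(0)=0$, $T_0\phi$ denotes its Taylor series at $0$, $T_0\phi=\phi'(0)X+\frac{\phi''(0)}{2}X^2+\cdots$, regarded as an element of the group $F$ of formally invertible formal power series with real coefficients in the indeterminate $X$ (zero constant term, nonzero coefficient of $X$), with group operation formal composition and $^{-1}$ denoting compositional inverse; $T_0$ is a homomorphism from the group of diffeomorphisms fixing $0$ to $F$. *)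

From Stdlib Require Import Reals.
From Coquelicot Require Import Coquelicot.
Open Scope R_scope.

Definition smooth (f : R -> R) : Prop := forall (n : nat) (x : R), ex_derive_n f n x.

Definition inverse_fun (f g : R -> R) : Prop :=
  (forall x, g (f x) = x) /\ (forall y, f (g y) = y).

Definition diffeo (f : R -> R) : Prop :=
  smooth f /\ exists g, inverse_fun f g /\ smooth g.

Definition diffeo_plus (f : R -> R) : Prop :=
  diffeo f /\ forall x y, x < y -> f x < f y.
Definition diffeo_minus (f : R -> R) : Prop :=
  diffeo f /\ forall x y, x < y -> f y < f x.

Definition fps := nat -> R.

Definition fps_X : fps := fun n => if Nat.eqb n 1 then 1 else 0.
Definition fps_one : fps := fun n => if Nat.eqb n 0 then 1 else 0.

Definition fps_mul (A B : fps) : fps :=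
  fun n => sum_f_R0 (fun i => A i * B (n - i)%nat) n.
Fixpoint fps_pow (B : fps) (k : nat) : fps :=
  match k with
  | O => fps_one
  | S k' => fps_mul B (fps_pow B k')
  end.

(** Formal composition A o B (meaningful for B with zero constant term,
    which is the case for all elements of the group F). *)
Definition fps_comp (A B : fps) : fps :=
  fun n => sum_f_R0 (fun k => A k * fps_pow B k n) n.

Definition T0 (phi : R -> R) : fps :=
  fun n => Derive_n phi n 0 / INR (Factorial.fact n).

(* (1) gives (2) with h1 = h and h2 = id. Conversely, let g1 = h1^-1 o g o h1 and
   g2 = h2^-1 o g1 o h2; then g2 o g2 = f o f and T0 g2 = T0 f. Both f and g2 swap the
   half-lines (-oo, 0) and (0, +oo), so the map H equal to g2 o f^-1 on (-oo, 0) and to the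
   identity on [0, +oo) is an increasing bijection with H o f = g2 o H. It is smooth because
   g2 o f^-1 has the Taylor series of the identity at 0, so the two pieces glue to infinite
   order. Taylor series of composites are computed by comparing truncated power series up to
   O(x^(n+1)) near 0. *)

From Stdlib Require Import Reals Lra Lia Arith FunctionalExtensionality.
From Coquelicot Require Import Coquelicot.
From Stdlib Require Import ssreflect.
Open Scope R_scope.

(** * Smoothness and gluing at 0 *)

Definition of_class (n : nat) (f : R -> R) : Prop :=
  forall k, (k <= n)%nat -> forall x, ex_derive_n f k x.

Lemma Derive_n_S_Derive (f : R -> R) n x :
  Derive_n f (S n) x = Derive_n (Derive f) n x.
Proof. by rewrite -Nat.add_1_r (Derive_n_comp f n 1 x). Qed.

Lemma of_class_S n f :
  of_class (S n) f <-> (forall x, ex_derive f x) /\ of_class n (Derive f).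
Proof.
  split.
  - move=> Hf; split; first by move=> x; apply: (Hf 1%nat); lia.
    move=> [|k] Hk x //=.
    apply: (ex_derive_ext (Derive_n f (S k))); first by move=> t; rewrite Derive_n_S_Derive.
    apply: (Hf (S (S k))); lia.
  - move=> [Hf1 Hf2] [|[|k]] Hk x //=.
    apply: (ex_derive_ext (Derive_n (Derive f) k)); first by move=> t; rewrite -Derive_n_S_Derive.
    apply: (Hf2 (S k)); lia.
Qed.

Lemma of_class_0 f : of_class 0 f.
Proof. by move=> k Hk x; have -> : k = 0%nat by lia. Qed.

Lemma of_class_Sn_n n f : of_class (S n) f -> of_class n f.
Proof. move=> Hf k Hk; apply: Hf; lia. Qed.

Lemma of_class_ext n f g : (forall x, f x = g x) -> of_class n f -> of_class n g.
Proof. move=> E Hf k Hk x; apply: (ex_derive_n_ext f) => //; exact: Hf. Qed.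

Lemma of_class_plus n f g :
  of_class n f -> of_class n g -> of_class n (fun x => f x + g x).
Proof.
  move=> Hf Hg k Hk x.
  by apply: ex_derive_n_plus; apply: filter_forall => y j Hj; [apply: Hf | apply: Hg]; lia.
Qed.

Lemma of_class_mult n : forall f g,
  of_class n f -> of_class n g -> of_class n (fun x => f x * g x).
Proof.
  elim: n => [|n IH] f g Hf Hg; first exact: of_class_0.
  have [Df Hf'] := proj1 (of_class_S n f) Hf.
  have [Dg Hg'] := proj1 (of_class_S n g) Hg.
  apply/of_class_S; split; first by move=> x; apply: ex_derive_mult.
  apply: (of_class_ext _ (fun x => Derive f x * g x + f x * Derive g x)).
    by move=> x; rewrite Derive_mult.
  by apply: of_class_plus; apply: IH => //; apply: of_class_Sn_n.
Qed.

Lemma of_class_comp n : forall f g,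
  of_class n f -> of_class n g -> of_class n (fun x => f (g x)).
Proof.
  elim: n => [|n IH] f g Hf Hg; first exact: of_class_0.
  have [Df Hf'] := proj1 (of_class_S n f) Hf.
  have [Dg Hg'] := proj1 (of_class_S n g) Hg.
  apply/of_class_S; split; first by move=> x; apply: ex_derive_comp.
  apply: (of_class_ext _ (fun x => Derive f (g x) * Derive g x)).
    by move=> x; rewrite (Derive_comp f g x); [ring | apply: Df | apply: Dg].
  by apply: of_class_mult => //; apply: IH => //; apply: of_class_Sn_n.
Qed.

Lemma smooth_of_class f : smooth f <-> forall n, of_class n f.
Proof. by split=> [Hf n k _ | Hf n]; [apply: Hf | apply: (Hf n n)]. Qed.

Lemma smooth_comp f g : smooth f -> smooth g -> smooth (fun x => f (g x)).
Proof. rewrite !smooth_of_class => Hf Hg n; exact: of_class_comp. Qed.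

Lemma smooth_id : smooth (fun x => x).
Proof.
  move=> n x; apply: (ex_derive_n_ext (fun x => x ^ 1)); last exact: ex_derive_n_pow.
  by move=> t /=; rewrite Rmult_1_r.
Qed.

Lemma smooth_comp_opp f : smooth f -> smooth (fun x => f (- x)).
Proof. by move=> Hf n x; apply: ex_derive_n_comp_opp; apply: filter_forall. Qed.

Definition glue (u v : R -> R) (x : R) : R :=
  match Rlt_dec x 0 with left _ => u x | right _ => v x end.

Lemma glue_lt u v x : x < 0 -> glue u v x = u x.
Proof. by rewrite /glue; case: (Rlt_dec x 0). Qed.

Lemma glue_ge u v x : 0 <= x -> glue u v x = v x.
Proof. by rewrite /glue; case: (Rlt_dec x 0) => // Hx; lra. Qed.

Lemma is_derive_glue u v :
  (forall x, ex_derive u x) -> (forall x, ex_derive v x) ->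
  u 0 = v 0 -> Derive u 0 = Derive v 0 ->
  forall x, is_derive (glue u v) x (glue (Derive u) (Derive v) x).
Proof.
  move=> Du Dv E0 E1 x; rewrite {2}/glue.
  case: (Rtotal_order x 0) => [Hx | [-> | Hx]].
  - case: (Rlt_dec x 0) => // _.
    apply: (is_derive_ext_loc u); last exact: Derive_correct.
    apply: filter_imp (open_lt 0 x Hx) => t Ht; rewrite /glue.
    by case: (Rlt_dec t 0).
  - case: (Rlt_dec 0 0) => [|_]; first lra.
    apply/is_derive_Reals => eps Heps.
    have [d1 Hd1] := proj1 (is_derive_Reals _ _ _) (Derive_correct u 0 (Du 0)) eps Heps.
    have [d2 Hd2] := proj1 (is_derive_Reals _ _ _) (Derive_correct v 0 (Dv 0)) eps Heps.
    have Hd : 0 < Rmin d1 d2 by apply: Rmin_pos; apply: cond_pos.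
    exists (mkposreal _ Hd) => h Hh0 /= Hh.
    have Hh1 := Rlt_le_trans _ _ _ Hh (Rmin_l d1 d2).
    have Hh2 := Rlt_le_trans _ _ _ Hh (Rmin_r d1 d2).
    rewrite /glue; case: (Rlt_dec 0 0) => [|_]; first lra.
    case: (Rlt_dec (0 + h) 0) => _; last exact: Hd2.
    by rewrite -E0 -E1; apply: Hd1.
  - case: (Rlt_dec x 0) => [|_]; first lra.
    apply: (is_derive_ext_loc v); last exact: Derive_correct.
    apply: filter_imp (open_gt 0 x Hx) => t Ht; rewrite /glue.
    by case: (Rlt_dec t 0) => //; lra.
Qed.

Lemma of_class_glue n : forall u v, of_class n u -> of_class n v ->
  (forall k, (k <= n)%nat -> Derive_n u k 0 = Derive_n v k 0) ->
  of_class n (glue u v).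
Proof.
  elim: n => [|n IH] u v Hu Hv E; first exact: of_class_0.
  have [Du Hu'] := proj1 (of_class_S n u) Hu.
  have [Dv Hv'] := proj1 (of_class_S n v) Hv.
  have G := is_derive_glue u v Du Dv (E 0%nat ltac:(lia)) (E 1%nat ltac:(lia)).
  apply/of_class_S; split; first by move=> x; eexists; apply: G.
  apply: (of_class_ext n (glue (Derive u) (Derive v))).
    by move=> x; rewrite (is_derive_unique _ _ _ (G x)).
  apply: IH => // k Hk; rewrite -!Derive_n_S_Derive; apply: E; lia.
Qed.

Lemma T0_Derive_n phi psi :
  T0 phi = T0 psi -> forall n, Derive_n phi n 0 = Derive_n psi n 0.
Proof.
  move=> E n; have := f_equal (fun A => A n) E; rewrite /T0 => E'.
  apply: (Rmult_eq_reg_r (/ INR (fact n))) => //.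
  by apply: Rinv_neq_0_compat; apply: not_0_INR; apply: fact_neq_0.
Qed.

Lemma smooth_glue u v : smooth u -> smooth v -> T0 u = T0 v -> smooth (glue u v).
Proof.
  rewrite !smooth_of_class => Hu Hv E n.
  by apply: of_class_glue => // k _; apply: T0_Derive_n.
Qed.

(** * Agreement to order n at 0 *)

Definition agree_to (n : nat) (u v : R -> R) : Prop :=
  exists C, locally 0 (fun x => Rabs (u x - v x) <= C * Rabs x ^ S n).

Definition bounded_near0 (u : R -> R) : Prop :=
  exists M, locally 0 (fun x => Rabs (u x) <= M).

Lemma locally_Rabs_le_1 : locally 0 (fun x : R => Rabs x <= 1).
Proof.
  exists (mkposreal 1 Rlt_0_1) => y; rewrite /ball /= /AbsRing_ball /= /abs /minus /plus /opp /=.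
  by rewrite Ropp_0 Rplus_0_r; lra.
Qed.

Lemma agree_to_ext n u v : (forall x, u x = v x) -> agree_to n u v.
Proof.
  move=> E; exists 0; apply: filter_forall => x.
  by rewrite E Rminus_diag Rabs_R0 Rmult_0_l; lra.
Qed.

Lemma agree_to_sym {n u v} : agree_to n u v -> agree_to n v u.
Proof. by move=> [C HC]; exists C; apply: filter_imp HC => x; rewrite Rabs_minus_sym. Qed.

Lemma agree_to_plus n u u' v v' : agree_to n u u' -> agree_to n v v' ->
  agree_to n (fun x => u x + v x) (fun x => u' x + v' x).
Proof.
  move=> [C1 A1] [C2 A2]; exists (C1 + C2).
  apply: filter_imp (filter_and _ _ A1 A2) => x [a1 a2].
  have -> : u x + v x - (u' x + v' x) = (u x - u' x) + (v x - v' x) by ring.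
  by apply: Rle_trans (Rabs_triang _ _) _; lra.
Qed.

Lemma agree_to_trans {n u} v {w} : agree_to n u v -> agree_to n v w -> agree_to n u w.
Proof.
  move=> Auv Avw; have [C HC] := agree_to_plus _ _ _ _ _ Auv Avw.
  exists C; apply: filter_imp HC => x; congr (Rabs _ <= _); ring.
Qed.

Lemma agree_to_mult n u u' v v' :
  bounded_near0 u -> bounded_near0 v' -> agree_to n u u' -> agree_to n v v' ->
  agree_to n (fun x => u x * v x) (fun x => u' x * v' x).
Proof.
  move=> [M1 B1] [M2 B2] [C1 A1] [C2 A2]; exists (M1 * C2 + C1 * M2).
  apply: filter_imp (filter_and _ _ (filter_and _ _ B1 B2) (filter_and _ _ A1 A2)).
  move=> x [[b1 b2] [a1 a2]].
  have -> : u x * v x - u' x * v' x = u x * (v x - v' x) + (u x - u' x) * v' x by ring.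
  apply: Rle_trans (Rabs_triang _ _) _; rewrite !Rabs_mult.
  have := Rmult_le_compat _ _ _ _ (Rabs_pos _) (Rabs_pos _) b1 a2.
  have := Rmult_le_compat _ _ _ _ (Rabs_pos _) (Rabs_pos _) a1 b2.
  lra.
Qed.

Lemma bounded_near0_const c : bounded_near0 (fun _ => c).
Proof. by exists (Rabs c); apply: filter_forall => x; lra. Qed.

Lemma bounded_near0_mult u v :
  bounded_near0 u -> bounded_near0 v -> bounded_near0 (fun x => u x * v x).
Proof.
  move=> [M1 B1] [M2 B2]; exists (M1 * M2).
  apply: filter_imp (filter_and _ _ B1 B2) => x [b1 b2].
  by rewrite Rabs_mult; apply: Rmult_le_compat => //; apply: Rabs_pos.
Qed.

Lemma bounded_near0_pow u k : bounded_near0 u -> bounded_near0 (fun x => u x ^ k).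
Proof.
  move=> Bu; elim: k => [|k IH]; first exact: bounded_near0_const.
  exact: bounded_near0_mult.
Qed.

Lemma agree_to_pow n u u' k : bounded_near0 u -> bounded_near0 u' -> agree_to n u u' ->
  agree_to n (fun x => u x ^ k) (fun x => u' x ^ k).
Proof.
  move=> Bu Bu' A; elim: k => [|k IH]; first exact: agree_to_ext.
  by apply: agree_to_mult => //; apply: bounded_near0_pow.
Qed.

Lemma agree_to_sum n (u v : nat -> R -> R) N :
  (forall k, (k <= N)%nat -> agree_to n (u k) (v k)) ->
  agree_to n (fun x => sum_f_R0 (fun k => u k x) N) (fun x => sum_f_R0 (fun k => v k x) N).
Proof.
  elim: N => [|N IH] A /=; first by apply: A; lia.
  by apply: agree_to_plus; [apply: IH => k Hk | ]; apply: A; lia.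
Qed.

Lemma pow_Rabs_le_1 x k : Rabs x <= 1 -> Rabs x ^ k <= 1.
Proof. by move=> Hx; rewrite -(pow1 k); apply: pow_incr; split => //; apply: Rabs_pos. Qed.

Lemma agree_to_bounded n u v : agree_to n u v -> bounded_near0 v -> bounded_near0 u.
Proof.
  move=> [C A] [M B]; exists (Rabs C + M).
  apply: filter_imp (filter_and _ _ locally_Rabs_le_1 (filter_and _ _ A B)).
  move=> x [x1 [a b]].
  have t1 := pow_Rabs_le_1 x (S n) x1.
  have t0 := pow_le _ (S n) (Rabs_pos x).
  have Ct : C * Rabs x ^ S n <= Rabs C
    by have := Rle_abs C; have := Rabs_pos C; nra.
  have -> : u x = (u x - v x) + v x by ring.
  by apply: Rle_trans (Rabs_triang _ _) _; lra.
Qed.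

Lemma agree_to_comp n phi Q psi : agree_to n phi Q ->
  filterlim psi (locally 0) (locally 0) -> agree_to 0 psi (fun _ => 0) ->
  agree_to n (fun x => phi (psi x)) (fun x => Q (psi x)).
Proof.
  move=> [C A] Hpsi [L Lpsi]; exists (Rabs C * L ^ S n).
  have A' : locally 0 (fun x => Rabs (phi (psi x) - Q (psi x)) <= C * Rabs (psi x) ^ S n)
    := Hpsi _ A.
  apply: filter_imp (filter_and _ _ A' Lpsi) => x [a l].
  rewrite Rminus_0_r pow_1 in l.
  have Hp : Rabs (psi x) ^ S n <= (L * Rabs x) ^ S n
    by apply: pow_incr; split => //; apply: Rabs_pos.
  rewrite Rpow_mult_distr in Hp.
  apply: (Rle_trans _ _ _ a); rewrite Rmult_assoc.
  apply: Rle_trans (Rmult_le_compat_l _ _ _ (Rabs_pos C) Hp).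
  by apply: Rmult_le_compat_r; [apply: pow_le; apply: Rabs_pos | apply: Rle_abs].
Qed.

Lemma locally_0_Rabs (P : R -> Prop) :
  locally 0 P -> exists d, 0 < d /\ forall x, Rabs x < d -> P x.
Proof.
  move=> [eps H]; exists eps; split => [|x Hx]; first exact: cond_pos.
  by apply: H; rewrite /ball /= /AbsRing_ball /abs /minus /plus /opp /= Ropp_0 Rplus_0_r.
Qed.

Lemma eq0_of_le_Rabs_near0 c K :
  locally 0 (fun x => x <> 0 -> Rabs c <= K * Rabs x) -> c = 0.
Proof.
  move=> /locally_0_Rabs [d [Hd H]].
  case: (Req_dec c 0) => // Hc; exfalso.
  have Hc' : 0 < Rabs c by apply: Rabs_pos_lt.
  have HK : 0 < Rabs K + 1 by have := Rabs_pos K; lra.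
  set x := Rmin (d / 2) (Rabs c / (2 * (Rabs K + 1))).
  have Hx : 0 < x by apply: Rmin_pos; apply: Rdiv_lt_0_compat; lra.
  have Hx1 : x <= d / 2 := Rmin_l _ _.
  have Hx2 : (Rabs K + 1) * x <= Rabs c / 2.
  { apply: (Rle_trans _ ((Rabs K + 1) * (Rabs c / (2 * (Rabs K + 1))))).
      by apply: Rmult_le_compat_l; [lra | apply: Rmin_r].
    by right; field; lra. }
  have := H x; rewrite Rabs_pos_eq; last lra.
  have := Rle_abs K; nra.
Qed.

(** * Truncated power series and Taylor polynomials *)

Definition fps_trunc (A : fps) (n : nat) (x : R) : R := sum_f_R0 (fun k => A k * x ^ k) n.

Lemma fps_trunc_shift A n x :
  fps_trunc A (S n) x = A 0%nat + x * fps_trunc (fun k => A (S k)) n x.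
Proof.
  rewrite /fps_trunc decomp_sum /=; last lia.
  by rewrite Rmult_1_r scal_sum; congr (_ + _); apply: sum_eq => i _; ring.
Qed.

Lemma Rabs_fps_trunc_le A n x :
  Rabs x <= 1 -> Rabs (fps_trunc A n x) <= sum_f_R0 (fun k => Rabs (A k)) n.
Proof.
  move=> Hx; apply: Rle_trans (Rsum_abs _ _) _; apply: sum_Rle => k _.
  rewrite Rabs_mult -RPow_abs.
  have := pow_Rabs_le_1 x k Hx; have := pow_le _ k (Rabs_pos x); have := Rabs_pos (A k); nra.
Qed.

Lemma bounded_near0_fps_trunc A n : bounded_near0 (fps_trunc A n).
Proof.
  exists (sum_f_R0 (fun k => Rabs (A k)) n).
  exact: filter_imp (Rabs_fps_trunc_le A n) locally_Rabs_le_1.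
Qed.

(* The neighbourhood is punctured so that the induction step can divide by [x]. *)
Lemma fps_trunc_coef_eq0 n : forall A C,
  locally 0 (fun x => x <> 0 -> Rabs (fps_trunc A n x) <= C * Rabs x ^ S n) ->
  forall k, (k <= n)%nat -> A k = 0.
Proof.
  elim: n => [|n IH] A C HA.
    move=> k Hk; have -> : k = 0%nat by lia.
    apply: (eq0_of_le_Rabs_near0 _ C).
    by apply: filter_imp HA => x; rewrite /fps_trunc /= !Rmult_1_r.
  set B := sum_f_R0 (fun k => Rabs (A (S k))) n.
  have A0 : A 0%nat = 0.
  { apply: (eq0_of_le_Rabs_near0 _ (Rabs C + B)).
    apply: filter_imp (filter_and _ _ HA locally_Rabs_le_1) => x [Hx Hx1] Hx0.
    have := Hx Hx0; rewrite fps_trunc_shift => Hs.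
    have Hp := Rabs_fps_trunc_le (fun k => A (S k)) n x Hx1; rewrite -/B in Hp.
    have Hpow : Rabs x ^ S (S n) <= Rabs x.
    { change (Rabs x ^ S (S n)) with (Rabs x * Rabs x ^ S n).
      have := pow_Rabs_le_1 x (S n) Hx1; have := Rabs_pos x; nra. }
    have -> : A 0%nat = (A 0%nat + x * fps_trunc (fun k => A (S k)) n x)
                         - x * fps_trunc (fun k => A (S k)) n x by ring.
    apply: Rle_trans (Rabs_triang _ _) _; rewrite Rabs_Ropp Rabs_mult.
    have := Rle_abs C; have := Rabs_pos C; have := Rabs_pos x;
      have := pow_le _ (S (S n)) (Rabs_pos x); have := Rabs_pos (fps_trunc (fun k => A (S k)) n x).
    nra. }
  have AS : forall k, (k <= n)%nat -> A (S k) = 0.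
  { apply: (IH _ C); apply: filter_imp HA => x Hx Hx0.
    have Hax : 0 < Rabs x by apply: Rabs_pos_lt.
    apply: (Rmult_le_reg_l (Rabs x)) => //; rewrite -Rabs_mult.
    have := Hx Hx0; rewrite fps_trunc_shift A0 Rplus_0_l /=; lra. }
  by move=> [|k] Hk //; apply: AS; lia.
Qed.

Lemma fps_trunc_unique n A B :
  agree_to n (fps_trunc A n) (fps_trunc B n) -> forall k, (k <= n)%nat -> A k = B k.
Proof.
  move=> [C HC] k Hk; apply: Rminus_diag_uniq.
  apply: (fps_trunc_coef_eq0 n (fun k => A k - B k) C) => //.
  apply: filter_imp HC => x Hx _; move: Hx; rewrite /fps_trunc -minus_sum.
  by congr (Rabs _ <= _); apply: sum_eq => i _; ring.
Qed.

Lemma T0_0 phi : T0 phi 0%nat = phi 0.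
Proof. by rewrite /T0 /= Rdiv_1_r. Qed.

Lemma T0_1 phi : T0 phi 1%nat = Derive phi 0.
Proof. by rewrite /T0 /= Rdiv_1_r. Qed.

Lemma T0_comp_opp phi k : smooth phi -> T0 (fun t => phi (- t)) k = (-1) ^ k * T0 phi k.
Proof.
  move=> Hs; rewrite /T0 Derive_n_comp_opp ?Ropp_0 /Rdiv ?Rmult_assoc //.
  exact: filter_forall.
Qed.

Lemma fps_trunc_at_0 A n : fps_trunc A n 0 = A 0%nat.
Proof.
  rewrite /fps_trunc; elim: n => [|n IH] /=; first ring.
  by rewrite IH; ring.
Qed.

Lemma fps_trunc_T0_comp_opp phi n x : smooth phi ->
  fps_trunc (T0 (fun t => phi (- t))) n (- x) = fps_trunc (T0 phi) n x.
Proof.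
  move=> Hs; apply: sum_eq => k _; rewrite T0_comp_opp //.
  have -> : (- x) ^ k = (-1) ^ k * x ^ k by rewrite -Rpow_mult_distr; congr (_ ^ _); ring.
  have E : (-1) ^ k * (-1) ^ k = 1 by rewrite -Rpow_mult_distr -(pow1 k); congr (_ ^ _); ring.
  transitivity ((-1) ^ k * (-1) ^ k * (T0 phi k * x ^ k)); first ring.
  by rewrite E Rmult_1_l.
Qed.

Lemma Taylor_remainder_le phi n M x : smooth phi ->
  (forall t, 0 < t < x -> Rabs (Derive_n phi (S n) t) <= M) -> 0 < x ->
  Rabs (phi x - fps_trunc (T0 phi) n x) <= M * x ^ S n.
Proof.
  move=> Hs HM Hx.
  have [z [Hz ->]] := Taylor_Lagrange phi n 0 x Hx (fun t _ k _ => Hs k t).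
  have -> : sum_f_R0 (fun m => (x - 0) ^ m / INR (fact m) * Derive_n phi m 0) n
            = fps_trunc (T0 phi) n x.
    by apply: sum_eq => k _; rewrite /T0 Rminus_0_r; field; apply: not_0_INR; apply: fact_neq_0.
  have Hf : 1 <= INR (fact (S n))
    by rewrite -INR_1; apply: le_INR; have := lt_O_fact (S n); lia.
  have Hxn : 0 < x ^ S n by apply: pow_lt.
  have HD := HM z Hz; have := Rabs_pos (Derive_n phi (S n) z).
  rewrite Rplus_minus_l Rminus_0_r Rabs_mult Rabs_div; last by lra.
  rewrite (Rabs_pos_eq (x ^ S n)) ?(Rabs_pos_eq (INR _)); try lra.
  have Hq : x ^ S n / INR (fact (S n)) <= x ^ S n.
  { rewrite /Rdiv -{2}(Rmult_1_r (x ^ S n)); apply: Rmult_le_compat_l; first lra.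
    by rewrite -Rinv_1; apply: Rinv_le_contravar; lra. }
  have := Rdiv_le_0_compat _ _ (Rlt_le _ _ Hxn) (Rlt_le_trans _ _ _ Rlt_0_1 Hf); nra.
Qed.

Lemma agree_to_T0 phi n : smooth phi -> agree_to n phi (fps_trunc (T0 phi) n).
Proof.
  move=> Hs.
  have [t0 [HM _]] :
    exists t0, (forall t, -1 <= t <= 1 -> Rabs (Derive_n phi (S n) t)
                                         <= Rabs (Derive_n phi (S n) t0)) /\ -1 <= t0 <= 1.
  { apply: (continuity_ab_maj (fun t => Rabs (Derive_n phi (S n) t))); first lra.
    move=> t _; apply: (continuity_pt_comp (Derive_n phi (S n))); last exact: Rcontinuity_abs.
    by apply/continuity_pt_filterlim; apply: ex_derive_continuous; apply: (Hs (S (S n))). }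
  exists (Rabs (Derive_n phi (S n) t0)).
  apply: filter_imp locally_Rabs_le_1 => x Hx.
  case: (Rtotal_order x 0) => [Hneg | [-> | Hpos]].
  (* [Taylor_Lagrange] only expands to the right, so [x < 0] goes through [t |-> phi (- t)]. *)
  - rewrite Rabs_left in Hx * => //.
    have := Taylor_remainder_le (fun t => phi (- t)) n _ (- x) (smooth_comp_opp _ Hs).
    rewrite Ropp_involutive fps_trunc_T0_comp_opp //; apply; last lra.
    move=> t Ht; rewrite Derive_n_comp_opp; last exact: filter_forall.
    by rewrite Rabs_mult pow_1_abs Rmult_1_l; apply: HM; lra.
  - by rewrite fps_trunc_at_0 T0_0 Rminus_diag Rabs_R0 pow_i ?Rmult_0_r; [lra | lia].
  - rewrite Rabs_pos_eq in Hx *; last lra.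
    by apply: Taylor_remainder_le => // t Ht; apply: HM; lra.
Qed.

(** * Taylor series of a composite *)

Lemma Rabs_le_sum_Rabs (A : nat -> R) N i :
  (i <= N)%nat -> Rabs (A i) <= sum_f_R0 (fun k => Rabs (A k)) N.
Proof.
  elim: N => [|N IH] Hi /=.
  - have -> : i = 0%nat by lia.
    exact: Rle_refl.
  - have [-> | Hi'] : i = S N \/ (i <= N)%nat by lia.
    + by have := cond_pos_sum (fun k => Rabs (A k)) N (fun k => Rabs_pos _); lra.
    + by have := IH Hi'; have := Rabs_pos (A (S N)); lra.
Qed.

Lemma Rabs_sum_le_const (f : nat -> R) K m :
  (forall i, (i <= m)%nat -> Rabs (f i) <= K) -> Rabs (sum_f_R0 f m) <= K * INR (S m).
Proof. by move=> H; apply: Rle_trans (Rsum_abs _ _) _; rewrite -sum_cte; apply: sum_Rle. Qed.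

Lemma Rabs_monomial_product_le (A B : fps) N i j x :
  Rabs x <= 1 -> (i <= N)%nat -> (j <= N)%nat -> (S N <= i + j)%nat ->
  Rabs (A i * x ^ i * (B j * x ^ j))
  <= sum_f_R0 (fun k => Rabs (A k)) N * sum_f_R0 (fun k => Rabs (B k)) N * Rabs x ^ S N.
Proof.
  move=> Hx Hi Hj Hij.
  have -> : A i * x ^ i * (B j * x ^ j) = (A i * B j) * (x ^ i * x ^ j) by ring.
  rewrite !Rabs_mult -!RPow_abs; apply: Rmult_le_compat.
  - by apply: Rmult_le_pos; apply: Rabs_pos.
  - by apply: Rmult_le_pos; apply: pow_le; apply: Rabs_pos.
  - by apply: Rmult_le_compat; try apply: Rabs_pos; apply: Rabs_le_sum_Rabs.
  - rewrite -pow_add -(Nat.sub_add (S N) (i + j)) // pow_add.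
    have := pow_Rabs_le_1 x (i + j - S N) Hx; have := pow_le _ (S N) (Rabs_pos x).
    have := pow_le _ (i + j - S N) (Rabs_pos x); nra.
Qed.

Lemma agree_to_fps_mul A B n :
  agree_to n (fun x => fps_trunc A n x * fps_trunc B n x) (fps_trunc (fps_mul A B) n).
Proof.
  case: n => [|N]; first by apply: agree_to_ext => x; rewrite /fps_trunc /fps_mul /=; ring.
  set SA := sum_f_R0 (fun k => Rabs (A k)) (S N).
  set SB := sum_f_R0 (fun k => Rabs (B k)) (S N).
  exists (SA * SB * INR (S (S N)) * INR (S (S N))).
  apply: filter_imp locally_Rabs_le_1 => x Hx.
  (* [cauchy_finite]: the product is the truncated Cauchy product plus monomials of
     degree > S N. *)
  rewrite /fps_trunc (cauchy_finite _ _ (S N)); last lia.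
  have -> : sum_f_R0 (fun k => sum_f_R0 (fun p => A p * x ^ p * (B (k - p)%nat * x ^ (k - p))) k)
              (S N) = fps_trunc (fps_mul A B) (S N) x.
  { apply: sum_eq => k _; rewrite /fps_mul Rmult_comm scal_sum; apply: sum_eq => p Hp.
    have -> : x ^ k = x ^ p * x ^ (k - p) by rewrite -pow_add; congr (_ ^ _); lia.
    ring. }
  rewrite /fps_trunc Rplus_minus_l.
  set K := SA * SB * Rabs x ^ S (S N).
  have HK : 0 <= K.
    apply: Rmult_le_pos; last by apply: pow_le; apply: Rabs_pos.
    by apply: Rmult_le_pos; apply: cond_pos_sum => k; apply: Rabs_pos.
  apply: (Rle_trans _ (K * INR (S (S N)) * INR (S (pred (S N))))); last first.
    have -> : SA * SB * INR (S (S N)) * INR (S (S N)) * Rabs x ^ S (S N)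
              = K * INR (S (S N)) * INR (S (S N)) by rewrite /K; ring.
    apply: Rmult_le_compat_l; last by apply: le_INR; lia.
    by apply: Rmult_le_pos => //; apply: pos_INR.
  apply: Rabs_sum_le_const => k Hk.
  apply: (Rle_trans _ (K * INR (S (pred (S N - k))))); last first.
    by apply: Rmult_le_compat_l => //; apply: le_INR; lia.
  apply: Rabs_sum_le_const => l Hl.
  apply: Rabs_monomial_product_le => //; lia.
Qed.

Lemma fps_trunc_one n x : fps_trunc fps_one n x = 1.
Proof.
  rewrite /fps_trunc /fps_one; elim: n => [|n IH] /=; first ring.
  by rewrite IH; ring.
Qed.

Lemma agree_to_fps_pow B n k :
  agree_to n (fun x => fps_trunc B n x ^ k) (fps_trunc (fps_pow B k) n).
Proof.
  elim: k => [|k IH]; first by apply: agree_to_ext => x; rewrite fps_trunc_one.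
  apply: (agree_to_trans _ _ (agree_to_fps_mul B (fps_pow B k) n)).
  apply: agree_to_mult IH; try exact: bounded_near0_fps_trunc.
  exact: agree_to_ext.
Qed.

Lemma fps_pow_low B : B 0%nat = 0 -> forall k j, (j < k)%nat -> fps_pow B k j = 0.
Proof.
  move=> B0; elim=> [|k IH] j Hj /=; first lia.
  apply: sum_eq_R0 => -[|i] Hi; first by rewrite B0 Rmult_0_l.
  by rewrite IH; [ring | lia].
Qed.

Lemma sum_f_R0_swap (f : nat -> nat -> R) N M :
  sum_f_R0 (fun k => sum_f_R0 (fun m => f k m) M) N
  = sum_f_R0 (fun m => sum_f_R0 (fun k => f k m) N) M.
Proof. by elim: N => [|N IH] //=; rewrite IH -plus_sum. Qed.

Lemma sum_f_R0_vanish_above (g : nat -> R) n m : (m <= n)%nat ->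
  (forall k, (m < k <= n)%nat -> g k = 0) -> sum_f_R0 g n = sum_f_R0 g m.
Proof.
  elim: n => [|n IH] Hmn H.
  - by have -> : m = 0%nat by lia.
  - have [-> // | Hm] : m = S n \/ (m <= n)%nat by lia.
    rewrite /= IH //; last by move=> k Hk; apply: H; lia.
    by rewrite (H (S n)); [ring | lia].
Qed.

Lemma agree_to_fps_comp A B n : B 0%nat = 0 ->
  agree_to n (fun x => fps_trunc A n (fps_trunc B n x)) (fps_trunc (fps_comp A B) n).
Proof.
  move=> B0.
  apply: (agree_to_trans (fun x => sum_f_R0 (fun k => A k * fps_trunc (fps_pow B k) n x) n)).
    apply: agree_to_sum => k _; apply: agree_to_mult (agree_to_fps_pow B n k).
    - exact: bounded_near0_const.
    - exact: bounded_near0_fps_trunc.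
    - exact: agree_to_ext.
  apply: agree_to_ext => x; rewrite /fps_trunc /fps_comp.
  transitivity (sum_f_R0 (fun k => sum_f_R0 (fun m => A k * fps_pow B k m * x ^ m) n) n).
    by apply: sum_eq => k _; rewrite scal_sum; apply: sum_eq => m _; ring.
  rewrite sum_f_R0_swap; apply: sum_eq => m Hm.
  rewrite Rmult_comm scal_sum (sum_f_R0_vanish_above _ n m) // => k Hk.
  by rewrite fps_pow_low //; [ring | lia].
Qed.

Lemma T0_comp phi psi : smooth phi -> smooth psi -> psi 0 = 0 ->
  T0 (fun x => phi (psi x)) = fps_comp (T0 phi) (T0 psi).
Proof.
  move=> Hphi Hpsi psi0; apply: functional_extensionality => n.
  have T0psi0 : T0 psi 0%nat = 0 by rewrite T0_0.
  have Apsi := agree_to_T0 psi n Hpsi.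
  have Bpsi := agree_to_bounded _ _ _ Apsi (bounded_near0_fps_trunc _ _).
  apply: (fps_trunc_unique n) => //.
  apply: (agree_to_trans _ (agree_to_sym (agree_to_T0 _ n (smooth_comp _ _ Hphi Hpsi)))).
  apply: (agree_to_trans _ _ (agree_to_fps_comp _ _ n T0psi0)).
  apply: (agree_to_trans (fun x => fps_trunc (T0 phi) n (psi x))).
  - apply: agree_to_comp (agree_to_T0 _ _ Hphi) _ _.
    + by rewrite -{2}psi0; apply: ex_derive_continuous; apply: (Hpsi 1%nat).
    + apply: (agree_to_trans _ (agree_to_T0 psi 0 Hpsi) (agree_to_ext _ _ _ _)) => x.
      by rewrite /fps_trunc /= T0psi0 Rmult_0_l.
  - apply: agree_to_sum => k _; apply: agree_to_mult.
    + exact: bounded_near0_const.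
    + exact: bounded_near0_pow (bounded_near0_fps_trunc _ _).
    + exact: agree_to_ext.
    + exact: agree_to_pow (bounded_near0_fps_trunc _ _) Apsi.
Qed.

(** * The group of formal power series under composition *)

Lemma sum_f_R0_delta (v : R) j N : (j <= N)%nat ->
  sum_f_R0 (fun i => if Nat.eqb i j then v else 0) N = v.
Proof.
  elim: N => [|N IH] Hj; first by have -> : j = 0%nat by lia.
  have [-> | Hj'] : j = S N \/ (j <= N)%nat by lia.
  - rewrite tech5 Nat.eqb_refl sum_eq_R0 ?Rplus_0_l // => i Hi.
    by case: (Nat.eqb_spec i (S N)) => //; lia.
  - rewrite tech5 IH //; case: (Nat.eqb_spec (S N) j) => [|_]; [lia | ring].
Qed.

Lemma fps_pow_diag B : B 0%nat = 0 -> forall m, fps_pow B m m = B 1%nat ^ m.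
Proof.
  move=> B0; elim=> [|m IH] //=.
  rewrite /fps_mul (sum_eq _ (fun i => if Nat.eqb i 1 then B 1%nat * fps_pow B m m else 0)).
    by rewrite sum_f_R0_delta ?IH //; lia.
  move=> i Hi; case: (Nat.eqb_spec i 1) => [-> | Hi1]; first by rewrite Nat.sub_1_r.
  case: i Hi Hi1 => [|i] Hi Hi1; first by rewrite B0 Rmult_0_l.
  by rewrite fps_pow_low //; [ring | lia].
Qed.

Lemma fps_comp_cancel_r A C B : B 0%nat = 0 -> B 1%nat <> 0 ->
  fps_comp A B = fps_comp C B -> A = C.
Proof.
  move=> B0 B1 E; apply: functional_extensionality => m.
  suff : forall j, (j <= m)%nat -> A j = C j by apply; lia.
  elim: m => [|m IH] j Hj.
    have -> : j = 0%nat by lia.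
    by have := f_equal (fun F => F 0%nat) E; rewrite /fps_comp /= /fps_one /=; lra.
  case: (Nat.eq_dec j (S m)) => [-> | Hjm]; last by apply: IH; lia.
  have := f_equal (fun F => F (S m)) E; rewrite /fps_comp !tech5.
  rewrite (sum_eq (fun k => A k * fps_pow B k (S m)) (fun k => C k * fps_pow B k (S m)));
    last by move=> i Hi; rewrite IH.
  rewrite fps_pow_diag // => Em.
  apply: (Rmult_eq_reg_r (B 1%nat ^ S m)); first lra.
  exact: pow_nonzero.
Qed.

Lemma fps_pow_X k m : fps_pow fps_X k m = if Nat.eqb k m then 1 else 0.
Proof.
  elim: k m => [|k IH] [|m] //=; rewrite /fps_mul.
  - by rewrite /fps_X /=; ring.
  - rewrite (sum_eq _ (fun i => if Nat.eqb i 1 then fps_pow fps_X k m else 0)).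
      by rewrite sum_f_R0_delta ?IH //; lia.
    move=> i Hi; rewrite /fps_X; case: (Nat.eqb_spec i 1) => [-> | _]; last ring.
    by rewrite Nat.sub_1_r /= Rmult_1_l.
Qed.

Lemma fps_comp_X_r A : fps_comp A fps_X = A.
Proof.
  apply: functional_extensionality => m; rewrite /fps_comp.
  rewrite (sum_eq _ (fun k => if Nat.eqb k m then A m else 0)) ?sum_f_R0_delta //.
  by move=> i _; rewrite fps_pow_X; case: (Nat.eqb_spec i m) => [-> | _]; ring.
Qed.

Lemma fps_comp_X_l A : A 0%nat = 0 -> fps_comp fps_X A = A.
Proof.
  move=> A0; apply: functional_extensionality => -[|m]; rewrite /fps_comp.
    by rewrite /= /fps_X /= A0; ring.
  rewrite (sum_eq _ (fun k => if Nat.eqb k 1 then fps_pow A 1 (S m) else 0)).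
    rewrite sum_f_R0_delta /= /fps_mul; last lia.
    rewrite (sum_eq _ (fun i => if Nat.eqb i (S m) then A (S m) else 0)) ?sum_f_R0_delta //.
    move=> i Hi; rewrite /fps_one; case: (Nat.eqb_spec i (S m)) => [-> | Hne].
      by rewrite Nat.sub_diag /=; ring.
    by case: (Nat.eqb_spec (S m - i) 0) => [|_]; [lia | ring].
  by move=> i _; rewrite /fps_X; case: (Nat.eqb_spec i 1) => [-> | _]; ring.
Qed.

Lemma T0_id : T0 (fun x => x) = fps_X.
Proof.
  apply: functional_extensionality => n; rewrite /T0 /fps_X.
  rewrite (Derive_n_ext (fun x => x) (fun x => x ^ 1) n 0); last by move=> x; rewrite pow_1.
  rewrite Derive_n_pow; case: n => [|[|n]] /=; try field.
  by apply: not_0_INR; have := lt_O_fact n; lia.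
Qed.

(** * Diffeomorphisms and conjugacy *)

Lemma inverse_fun_comp f finv g ginv : inverse_fun f finv -> inverse_fun g ginv ->
  inverse_fun (fun x => f (g x)) (fun y => ginv (finv y)).
Proof. by move=> [Ef1 Ef2] [Eg1 Eg2]; split => x; rewrite ?Ef1 ?Eg1 ?Eg2 ?Ef2. Qed.

Lemma inverse_fun_unique f g g' : inverse_fun f g -> inverse_fun f g' -> g = g'.
Proof.
  move=> [_ E2] [E1' _]; apply: functional_extensionality => y.
  by rewrite -{2}(E2 y) E1'.
Qed.

Lemma smooth_inverse h hinv : diffeo h -> inverse_fun h hinv -> smooth hinv.
Proof. by move=> [_ [g [Hg Sg]]] Hinv; rewrite (inverse_fun_unique _ _ _ Hinv Hg). Qed.

Lemma diffeo_comp f g : diffeo f -> diffeo g -> diffeo (fun x => f (g x)).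
Proof.
  move=> [Sf [finv [Hf Sfinv]]] [Sg [ginv [Hg Sginv]]]; split; first exact: smooth_comp.
  by exists (fun y => ginv (finv y)); split; [apply: inverse_fun_comp | apply: smooth_comp].
Qed.

Lemma diffeo_plus_id : diffeo_plus (fun x => x).
Proof.
  split=> //; split; first exact: smooth_id.
  by exists (fun x => x); split; [split | apply: smooth_id].
Qed.

Lemma diffeo_plus_comp f g : diffeo_plus f -> diffeo_plus g -> diffeo_plus (fun x => f (g x)).
Proof. by move=> [Df If] [Dg Ig]; split; [apply: diffeo_comp | move=> x y /Ig /If]. Qed.

Lemma incr_inverse f finv : (forall x y, x < y -> f x < f y) -> inverse_fun f finv ->
  forall x y, x < y -> finv x < finv y.
Proof.
  move=> If [_ E2] x y Hxy.
  case: (Rlt_le_dec (finv x) (finv y)) => // /Rle_lt_or_eq_dec [Hlt | Heq].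
  - by have := If _ _ Hlt; rewrite !E2; lra.
  - by have := f_equal f Heq; rewrite !E2; lra.
Qed.

Lemma decr_inverse f finv : (forall x y, x < y -> f y < f x) -> inverse_fun f finv ->
  forall x y, x < y -> finv y < finv x.
Proof.
  move=> Df [_ E2] x y Hxy.
  case: (Rlt_le_dec (finv y) (finv x)) => // /Rle_lt_or_eq_dec [Hlt | Heq].
  - by have := Df _ _ Hlt; rewrite !E2; lra.
  - by have := f_equal f Heq; rewrite !E2; lra.
Qed.

Lemma diffeo_minus_conj h hinv g : diffeo_plus h -> inverse_fun h hinv ->
  diffeo_minus g -> diffeo_minus (fun x => hinv (g (h x))).
Proof.
  move=> [Dh Ih] Hinv [Dg Jg]; split.
  - apply: diffeo_comp; last exact: diffeo_comp.
    by split; [apply: smooth_inverse Hinv | exists h; split; [case: Hinv | case: Dh]].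
  - by move=> x y /Ih /Jg /(incr_inverse _ _ Ih Hinv).
Qed.

Lemma Derive_neq0_of_inverse h hinv : smooth h -> smooth hinv -> inverse_fun h hinv ->
  forall x, Derive h x <> 0.
Proof.
  move=> Sh Shinv [E1 _] x Hx.
  have := Derive_comp hinv h x (Shinv 1%nat (h x)) (Sh 1%nat x).
  by rewrite Hx Rmult_0_l (Derive_ext _ (fun t => t)) // Derive_id; apply: R1_neq_R0.
Qed.

Lemma neg_of_pos_decr phi : (forall x y, x < y -> phi y < phi x) -> phi 0 = 0 ->
  forall x, 0 < x -> phi x < 0.
Proof. by move=> D phi0 x /D; rewrite phi0. Qed.

Lemma pos_of_neg_decr phi : (forall x y, x < y -> phi y < phi x) -> phi 0 = 0 ->
  forall x, x < 0 -> 0 < phi x.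
Proof. by move=> D phi0 x /D; rewrite phi0. Qed.

Lemma strict_decr_fixpoint g a : (forall x y, x < y -> g y < g x) -> g 0 = 0 ->
  g a = a -> a = 0.
Proof.
  move=> Dg g0 ga; case: (Rtotal_order a 0) => [H | [// | H]];
    by have := Dg _ _ H; rewrite g0 ga; lra.
Qed.

Definition conjugate_plus (f g : R -> R) : Prop :=
  exists h hinv, diffeo_plus h /\ inverse_fun h hinv /\ forall x, f x = hinv (g (h x)).

Lemma conjugate_plus_trans f g k :
  conjugate_plus f g -> conjugate_plus g k -> conjugate_plus f k.
Proof.
  move=> [h1 [h1inv [Dh1 [Hi1 E1]]]] [h2 [h2inv [Dh2 [Hi2 E2]]]].
  exists (fun x => h2 (h1 x)), (fun y => h1inv (h2inv y)).
  split; first exact: diffeo_plus_comp.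
  by split; [apply: inverse_fun_comp | move=> x; rewrite E1 E2].
Qed.

Lemma T0_comp_inverse phi psi psiinv : smooth phi -> smooth psi -> smooth psiinv ->
  inverse_fun psi psiinv -> psiinv 0 = 0 -> T0 phi = T0 psi ->
  T0 (fun x => phi (psiinv x)) = T0 (fun x => x).
Proof.
  move=> Sphi Spsi Spsiinv [_ E] psiinv0 Tphi.
  rewrite T0_comp // Tphi -T0_comp //.
  by congr T0; apply: functional_extensionality.
Qed.

Section GlueConjugacy.

Variables f finv g ginv : R -> R.
Hypothesis Hf : inverse_fun f finv.
Hypothesis Hg : inverse_fun g ginv.
Hypothesis Df : forall x y, x < y -> f y < f x.
Hypothesis Dg : forall x y, x < y -> g y < g x.
Hypothesis f0 : f 0 = 0.
Hypothesis g0 : g 0 = 0.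
Hypothesis fg_sqr : forall x, g (g x) = f (f x).

Local Notation H := (glue (fun x => g (finv x)) (fun x => x)).
Local Notation Hinv := (glue (fun y => f (ginv y)) (fun y => y)).

Let finv0 : finv 0 = 0. Proof. by rewrite -{1}f0 (proj1 Hf). Qed.
Let ginv0 : ginv 0 = 0. Proof. by rewrite -{1}g0 (proj1 Hg). Qed.
Let Dfinv := decr_inverse f finv Df Hf.
Let Dginv := decr_inverse g ginv Dg Hg.

Let H_neg x : x < 0 -> H x < 0.
Proof.
  move=> Hx; rewrite glue_lt //.
  exact: neg_of_pos_decr Dg g0 _ (pos_of_neg_decr _ Dfinv finv0 _ Hx).
Qed.

Let Hinv_neg y : y < 0 -> Hinv y < 0.
Proof.
  move=> Hy; rewrite glue_lt //.
  exact: neg_of_pos_decr Df f0 _ (pos_of_neg_decr _ Dginv ginv0 _ Hy).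
Qed.

Lemma glue_conj_inverse : inverse_fun H Hinv.
Proof.
  split=> x; case: (Rlt_le_dec x 0) => Hx.
  - have := H_neg x Hx => HHx.
    by rewrite glue_lt // glue_lt // (proj1 Hg) (proj2 Hf).
  - by rewrite !glue_ge.
  - have := Hinv_neg x Hx => HHx.
    by rewrite glue_lt // glue_lt // (proj1 Hf) (proj2 Hg).
  - by rewrite !glue_ge.
Qed.

Lemma glue_conj_incr x y : x < y -> H x < H y.
Proof.
  move=> Hxy; case: (Rlt_le_dec y 0) => Hy.
  - by rewrite !glue_lt; [apply: Dg; apply: Dfinv | lra | lra].
  - rewrite (glue_ge _ _ y) //; case: (Rlt_le_dec x 0) => Hx; last by rewrite glue_ge.
    by have := H_neg x Hx; lra.
Qed.

Lemma glue_conj_comm x : H (f x) = g (H x).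
Proof.
  case: (Rtotal_order x 0) => [Hx | [-> | Hx]].
  - have := pos_of_neg_decr _ Df f0 _ Hx => Hfx.
    by rewrite glue_ge ?glue_lt //; [rewrite fg_sqr (proj2 Hf) | lra].
  - by rewrite f0 glue_ge ?g0 //; lra.
  - have := neg_of_pos_decr _ Df f0 _ Hx => Hfx.
    by rewrite glue_lt // glue_ge ?(proj1 Hf) //; lra.
Qed.

End GlueConjugacy.

Lemma conjugate_plus_of_sqr_T0 f g : diffeo_minus f -> diffeo_minus g -> f 0 = 0 ->
  (forall x, g (g x) = f (f x)) -> T0 g = T0 f -> conjugate_plus f g.
Proof.
  move=> [[Sf [finv [Hf Sfinv]]] Df] [[Sg [ginv [Hg Sginv]]] Dg] f0 fg_sqr Tgf.
  have g0 : g 0 = 0 by rewrite -T0_0 Tgf T0_0.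
  have finv0 : finv 0 = 0 by rewrite -{1}f0 (proj1 Hf).
  have ginv0 : ginv 0 = 0 by rewrite -{1}g0 (proj1 Hg).
  have Hi := glue_conj_inverse f finv g ginv Hf Hg Df Dg f0 g0.
  exists (glue (fun x => g (finv x)) (fun x => x)), (glue (fun y => f (ginv y)) (fun y => y)).
  split; [split; [split | ] | split => // x].
  - apply: smooth_glue; [exact: smooth_comp | exact: smooth_id | exact: T0_comp_inverse].
  - exists (glue (fun y => f (ginv y)) (fun y => y)); split => //.
    apply: smooth_glue; [exact: smooth_comp | exact: smooth_id |].
    exact: T0_comp_inverse _ _ _ Sf Sg Sginv Hg ginv0 (eq_sym Tgf).
  - exact: glue_conj_incr f finv g Hf Df Dg f0 g0.
  - by rewrite -(glue_conj_comm f finv g Hf Df f0 g0 fg_sqr) (proj1 Hi).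
Qed.

Lemma T0_inverse h hinv P : diffeo h -> inverse_fun h hinv -> h 0 = 0 ->
  fps_comp P (T0 h) = fps_X -> T0 hinv = P.
Proof.
  move=> Dh Hi h0 HP; have Sh := proj1 Dh; have Shinv := smooth_inverse _ _ Dh Hi.
  apply: (fps_comp_cancel_r _ _ (T0 h)); first by rewrite T0_0.
    by rewrite T0_1; apply: (Derive_neq0_of_inverse h hinv).
  rewrite HP -T0_comp // -T0_id.
  by congr T0; apply: functional_extensionality; case: Hi.
Qed.

Lemma T0_conj h hinv g : smooth h -> smooth hinv -> smooth g -> h 0 = 0 -> g 0 = 0 ->
  T0 (fun x => hinv (g (h x))) = fps_comp (T0 hinv) (fps_comp (T0 g) (T0 h)).
Proof.
  move=> Sh Shinv Sg h0 g0.
  rewrite (T0_comp hinv (fun x => g (h x))) ?(T0_comp g h) ?h0 //.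
  exact: smooth_comp.
Qed.

Theorem theorem2p2 (f g : R -> R) :
  diffeo_minus f -> diffeo_minus g -> f 0 = 0 -> g 0 = 0 ->
  ((exists h hinv : R -> R, diffeo_plus h /\ inverse_fun h hinv /\
      forall x, f x = hinv (g (h x)))
   <->
   (exists h1 h1inv : R -> R,
      diffeo_plus h1 /\ h1 0 = 0 /\ inverse_fun h1 h1inv /\
      (forall x, f (f x) = h1inv (g (g (h1 x)))) /\
      exists h2 : R -> R,
        diffeo_plus h2 /\ h2 0 = 0 /\
        (forall x, h2 (f (f x)) = f (f (h2 x))) /\
        exists T0h2inv : fps,
          T0h2inv 0%nat = 0 /\
          fps_comp (T0 h2) T0h2inv = fps_X /\
          fps_comp T0h2inv (T0 h2) = fps_X /\
          T0 f = fps_comp T0h2inv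
                   (fps_comp (T0 (fun x => h1inv (g (h1 x)))) (T0 h2)))).
Proof.
  move=> Hf Hg f0 g0; split.
  - move=> [h [hinv [Hh [Hi Efg]]]].
    have h0 : h 0 = 0.
      apply: (strict_decr_fixpoint g _ (proj2 Hg) g0).
      by rewrite -{1}(proj2 Hi (g (h 0))) -Efg f0.
    exists h, hinv; split=> //; split=> //; split=> //; split.
      by move=> x; rewrite !Efg (proj2 Hi).
    exists (fun x => x); split; first exact: diffeo_plus_id.
    split=> //; split=> //.
    exists fps_X; rewrite T0_id !fps_comp_X_r fps_comp_X_l; last by rewrite T0_0 -Efg.
    by split=> //; split=> //; split=> //; congr T0; apply: functional_extensionality.
  - move=> [h1 [h1inv [Hh1 [h10 [Hi1 [Hsq [h2 [Hh2 [h20 [Hcomm [P [_ [_ [HP HT]]]]]]]]]]]]]].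
    have [h2inv [Hi2 _]] := proj2 (proj1 Hh2).
    set g1 := fun x => h1inv (g (h1 x)) in HT *.
    have Dg1 : diffeo_minus g1 := diffeo_minus_conj _ _ _ Hh1 Hi1 Hg.
    have g10 : g1 0 = 0 by rewrite /g1 h10 g0 -{1}h10 (proj1 Hi1).
    have Sg1 : smooth g1 := proj1 (proj1 Dg1).
    have Sh2 : smooth h2 := proj1 (proj1 Hh2).
    have Sh2inv : smooth h2inv := smooth_inverse _ _ (proj1 Hh2) Hi2.
    apply: (conjugate_plus_trans _ (fun x => h2inv (g1 (h2 x)))); last first.
      by apply: (conjugate_plus_trans _ g1); [exists h2, h2inv | exists h1, h1inv].
    apply: conjugate_plus_of_sqr_T0 => //; first exact: diffeo_minus_conj.
      by move=> x; rewrite /g1 (proj2 Hi2) (proj2 Hi1) -Hsq -Hcomm (proj1 Hi2).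
    by rewrite HT T0_conj // (T0_inverse h2 h2inv P) //; case: Hh2.
Qed.
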